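(* Let $\langle H,T\rangle$ be an ${\cal X}_5$-interpretation and $F$ a nested expression. Then $\langle H,T\rangle\models F$ iff $H\models F^T$; and $\langle H,T\rangle=\!\!|\;F$ iff $H=\!\!|\;F^T$.
   Context: Fix a set $\mathit{At}$ of atoms. An explicit literal is $p$ or $\sim p$; a set of explicit literals is consistent if it never contains both $p$ and $\sim p$. Nested expressions: $F ::= \top\mid\bot\mid p\mid F\vee F\mid F\wedge F\mid\neg F\mid\sim F$. Classical satisfaction/falsification of nested expressions by a consistent set $T$: $T\models\top$, $T$ does not falsify $\top$, $T\not\models\bot$, $T=\!\!|\;\bot$; $T\models p$ iff $p\in T$, $T=\!\!|\;p$ iff $\sim p\in T$; $\wedge$: satisfied iff both, falsified iff at least one falsified; $\vee$: satisfied iff at least one, falsified iff both falsified; $T\models\sim\varphi$ iff $T=\!\!|\;\varphi$, $T=\!\!|\;\sim\varphi$ iff $T\models\varphi$; $T\models\neg\varphi$ iff $T\not\models\varphi$, $T=\!\!|\;\neg\varphi$ iff $T\models\varphi$. Reduct: $\top^T=\top$, $\bot^T=\bot$, $p^T=p$, $(F\wedge G)^T=F^T\wedge G^T$, $(F\vee G)^T=F^T\vee G^T$, $(\sim F)^T=\sim(F^T)$, $(\neg F)^T=\bot$ if $T\models F$, $\top$ otherwise. ${\cal X}_5$: formulas $\varphi ::= p\mid\bot\mid\varphi\wedge\varphi\mid\varphi\vee\varphi\mid\varphi\to\varphi\mid\sim\varphi$ with $\neg\varphi:=\varphi\to\bot$, $\top:=\neg\bot$ (so nested expressions are formulas). An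 ${\cal X}_5$-interpretation is a pair $\langle H,T\rangle$ of consistent sets of explicit literals with $H\subseteq T$. Satisfaction/falsification: $\langle H,T\rangle\not\models\bot$, $=\!\!|\;\bot$; $\models p$ iff $p\in H$, $=\!\!|\;p$ iff $\sim p\in H$; $\wedge,\vee,\sim$ as in the classical clauses with $\langle H,T\rangle$ in place of $T$; $\langle H,T\rangle\models\varphi\to\psi$ iff (i) $\langle H,T\rangle\not\models\varphi$ or $\langle H,T\rangle\models\psi$ and (ii) $\langle T,T\rangle\not\models\varphi$ or $\langle T,T\rangle\models\psi$; $\langle H,T\rangle=\!\!|\;\varphi\to\psi$ iff $\langle T,T\rangle\models\varphi$ and $\langle H,T\rangle=\!\!|\;\psi$. *)

Set Implicit Arguments.

(* Explicit literals over atoms of type At: p or ~p (strong negation). *)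
Inductive lit (At : Type) : Type :=
| LPos : At -> lit At
| LNeg : At -> lit At.
Arguments LPos {At} _.
Arguments LNeg {At} _.

Definition litset (At : Type) := lit At -> Prop.

Definition consistent {At : Type} (T : litset At) : Prop :=
  forall p, ~ (T (LPos p) /\ T (LNeg p)).

Definition subset {At : Type} (H T : litset At) : Prop :=
  forall l, H l -> T l.

Inductive nexpr (At : Type) : Type :=
| NTop : nexpr At
| NBot : nexpr At
| NAtom : At -> nexpr At
| NOr : nexpr At -> nexpr At -> nexpr At
| NAnd : nexpr At -> nexpr At -> nexpr At
| NNot : nexpr At -> nexpr At
| NSneg : nexpr At -> nexpr At.
Arguments NTop {At}.
Arguments NBot {At}.
Arguments NAtom {At} _.
Arguments NOr {At} _ _.
Arguments NAnd {At} _ _.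
Arguments NNot {At} _.
Arguments NSneg {At} _.

(* Classical satisfaction / falsification of nested expressions by T:
   returns the pair (T |= F, T =| F). *)
Fixpoint csf {At : Type} (T : litset At) (F : nexpr At) : Prop * Prop :=
  match F with
  | NTop => (True, False)
  | NBot => (False, True)
  | NAtom p => (T (LPos p), T (LNeg p))
  | NAnd F G => (fst (csf T F) /\ fst (csf T G), snd (csf T F) \/ snd (csf T G))
  | NOr F G => (fst (csf T F) \/ fst (csf T G), snd (csf T F) /\ snd (csf T G))
  | NSneg F => (snd (csf T F), fst (csf T F))
  | NNot F => (~ fst (csf T F), fst (csf T F))
  end.

Definition csat {At : Type} (T : litset At) (F : nexpr At) : Prop := fst (csf T F).
Definition cfal {At : Type} (T : litset At) (F : nexpr At) : Prop := snd (csf T F).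

(* Reduct F^T.  Requires deciding T |= F; we use classical logic
   (excluded middle via ClassicalEpsilon-style choice), see below. *)
From Stdlib Require Import Classical ClassicalEpsilon.

Definition pdec (P : Prop) : {P} + {~ P} :=
  let H := excluded_middle_informative P in H.

Fixpoint reduct {At : Type} (T : litset At) (F : nexpr At) : nexpr At :=
  match F with
  | NTop => NTop
  | NBot => NBot
  | NAtom p => NAtom p
  | NAnd F G => NAnd (reduct T F) (reduct T G)
  | NOr F G => NOr (reduct T F) (reduct T G)
  | NSneg F => NSneg (reduct T F)
  | NNot F => if pdec (csat T F) then NBot else NTop
  end.

Inductive x5form (At : Type) : Type :=
| XAtom : At -> x5form At
| XBot : x5form At
| XAnd : x5form At -> x5form At -> x5form At
| XOr : x5form At -> x5form At -> x5form At
| XImp : x5form At -> x5form At -> x5form At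
| XSneg : x5form At -> x5form At.
Arguments XAtom {At} _.
Arguments XBot {At}.
Arguments XAnd {At} _ _.
Arguments XOr {At} _ _.
Arguments XImp {At} _ _.
Arguments XSneg {At} _.

Definition xneg {At : Type} (phi : x5form At) : x5form At := XImp phi XBot.
Definition xtop {At : Type} : x5form At := xneg XBot.

Fixpoint nexpr_to_x5 {At : Type} (F : nexpr At) : x5form At :=
  match F with
  | NTop => xtop
  | NBot => XBot
  | NAtom p => XAtom p
  | NAnd F G => XAnd (nexpr_to_x5 F) (nexpr_to_x5 G)
  | NOr F G => XOr (nexpr_to_x5 F) (nexpr_to_x5 G)
  | NNot F => xneg (nexpr_to_x5 F)
  | NSneg F => XSneg (nexpr_to_x5 F)
  end.

Fixpoint xsf {At : Type} (H T : litset At) (phi : x5form At) : Prop * Prop :=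
  match phi with
  | XBot => (False, True)
  | XAtom p => (H (LPos p), H (LNeg p))
  | XAnd a b => (fst (xsf H T a) /\ fst (xsf H T b), snd (xsf H T a) \/ snd (xsf H T b))
  | XOr a b => (fst (xsf H T a) \/ fst (xsf H T b), snd (xsf H T a) /\ snd (xsf H T b))
  | XSneg a => (snd (xsf H T a), fst (xsf H T a))
  | XImp a b =>
      (((~ fst (xsf H T a)) \/ fst (xsf H T b)) /\
       ((~ fst (xsf T T a)) \/ fst (xsf T T b)),
       fst (xsf T T a) /\ snd (xsf H T b))
  end.

Definition xsat {At : Type} (H T : litset At) (phi : x5form At) : Prop := fst (xsf H T phi).
Definition xfal {At : Type} (H T : litset At) (phi : x5form At) : Prop := snd (xsf H T phi).

Definition x5_interp {At : Type} (H T : litset At) : Prop :=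
  consistent H /\ consistent T /\ subset H T.


(* In an interpretation with H ⊆ T, X5-truth persists from <H,T> to <T,T>,
   and on total interpretations <T,T> a nested expression is evaluated
   classically by T.  Hence the value of ¬G at <H,T>, which only depends on
   <T,T> ⊨ G, is the constant ⊥ or ⊤ that the reduct puts in place of ¬G;
   every other connective is evaluated componentwise on both sides. *)

Lemma xsf_total_csf (At : Type) (T : litset At) (F : nexpr At) :
  (xsat T T (nexpr_to_x5 F) <-> csat T F) /\
  (xfal T T (nexpr_to_x5 F) <-> cfal T F).
Proof.
  unfold xsat, xfal, csat, cfal.
  induction F; simpl; tauto.
Qed.

Lemma xsf_persistent (At : Type) (H T : litset At) (phi : x5form At) :
  subset H T ->
  (xsat H T phi -> xsat T T phi) /\ (xfal H T phi -> xfal T T phi).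
Proof.
  intros HT; unfold xsat, xfal.
  induction phi; simpl; try tauto; split; apply HT.
Qed.

Lemma xsat_xneg (At : Type) (H T : litset At) (phi : x5form At) :
  subset H T -> (xsat H T (xneg phi) <-> ~ xsat T T phi).
Proof.
  intros HT; destruct (xsf_persistent At H T phi HT) as [Hpers _].
  unfold xsat in *; simpl; tauto.
Qed.

Lemma xfal_xneg (At : Type) (H T : litset At) (phi : x5form At) :
  xfal H T (xneg phi) <-> xsat T T phi.
Proof.
  unfold xfal, xsat; simpl; tauto.
Qed.

Lemma x5_nexpr_reduct (At : Type) (H T : litset At) (F : nexpr At) :
  subset H T ->
  (xsat H T (nexpr_to_x5 F) <-> csat H (reduct T F)) /\
  (xfal H T (nexpr_to_x5 F) <-> cfal H (reduct T F)).
Proof.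
  intros HT; induction F as [| | p | F IHF G IHG | F IHF G IHG | F _ | F IHF].
  6: {
    destruct (xsf_total_csf At T F) as [Htot _].
    cbn [nexpr_to_x5 reduct].
    rewrite xsat_xneg, xfal_xneg by exact HT.
    destruct (pdec (csat T F)); unfold csat, cfal; simpl; tauto.
  }
  all: unfold xsat, xfal, csat, cfal in *; simpl; tauto.
Qed.

Theorem lemma2 (At : Type) (H T : litset At) (F : nexpr At) :
  x5_interp H T ->
  (xsat H T (nexpr_to_x5 F) <-> csat H (reduct T F)) /\
  (xfal H T (nexpr_to_x5 F) <-> cfal H (reduct T F)).
Proof.
  intros [_ [_ HT]].
  exact (x5_nexpr_reduct At H T F HT).
Qed.
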